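(* Let $\mathbf{C}\in\mathbb{R}^{n\times n}$, $\tilde{\mathbf{S}}\in\mathbb{R}^{m\times n}$, $\mathbf{M}_\rho\in\mathbb{R}^{n\times n}$ and $\mathbf{P}\in\mathbb{R}^{n\times k}$ be matrices such that $\ker\tilde{\mathbf{S}}^\top=\{\mathbf{0}\}$, $\mathbf{C}\tilde{\mathbf{S}}^\top=\mathbf{0}$, and $\mathbf{K}_\rho=\mathbf{P}^\top\mathbf{C}^\top\mathbf{M}_\rho\mathbf{C}\mathbf{P}$ is nonsingular, i.e. $\det(\mathbf{K}_\rho)\neq0$. Then $\mathbf{P}\mathbf{x}$ is not a discrete gradient field, i.e. $\mathbf{P}\mathbf{x}\neq\tilde{\mathbf{S}}^\top\mathbf{y}$ for all $\mathbf{x}\in\mathbb{R}^k\setminus\{\mathbf{0}\}$, $\mathbf{y}\in\mathbb{R}^m\setminus\{\mathbf{0}\}$.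
   Context: In the paper's setting, $\mathbf{C}$ is the discrete curl, $-\tilde{\mathbf{S}}^\top$ the discrete gradient (restricted to degrees of freedom where boundary conditions are imposed) and $\tilde{\mathbf{S}}$ the discrete divergence matrix of a spatial discretisation (FEM with de Rham-conforming bases or FIT); $\mathbf{M}_\rho$ is the resistivity material matrix; and $\mathbf{P}$ is obtained from the projector onto the cotree edges of a tree-cotree gauge in the conducting region by deleting its zero columns. *)

From mathcomp Require Import all_boot all_order all_algebra.
Set Implicit Arguments. Unset Strict Implicit. Unset Printing Implicit Defensive.
Import Order.TTheory GRing.Theory Num.Theory.
Local Open Scope ring_scope.

Definition Krho (R : ringType) (n k : nat)
  (C Mrho : 'M[R]_n) (P : 'M[R]_(n, k)) : 'M[R]_k :=
  P^T *m C^T *m Mrho *m C *m P.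

From mathcomp Require Import all_boot all_order all_algebra.
Set Implicit Arguments. Unset Strict Implicit. Unset Printing Implicit Defensive.
Import Order.TTheory GRing.Theory Num.Theory.
Local Open Scope ring_scope.

(* If P x = S^T y is a discrete gradient, then C P x = C S^T y = 0, so K_rho x
   = P^T C^T M_rho (C P x) = 0 and x = 0 because K_rho is invertible. *)

Lemma unitmx_mulmx_eq0 (R : comUnitRingType) (n p : nat)
    (A : 'M[R]_n) (x : 'M[R]_(n, p)) :
  A \in unitmx -> (A *m x == 0) = (x == 0).
Proof.
move=> Aunit; apply/eqP/eqP=> [Ax0|->]; last exact: mulmx0.
by rewrite -(mulKmx Aunit x) Ax0 mulmx0.
Qed.

Lemma Krho_mulmx_eq0 (R : ringType) (n k p : nat)
    (C Mrho : 'M[R]_n) (P : 'M[R]_(n, k)) (x : 'M[R]_(k, p)) :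
  C *m (P *m x) = 0 -> Krho C Mrho P *m x = 0.
Proof. by move=> CPx0; rewrite /Krho -!mulmxA CPx0 !mulmx0. Qed.

Theorem proposition4 (R : realFieldType) (n m k : nat)
  (C : 'M[R]_n) (S : 'M[R]_(m, n)) (Mrho : 'M[R]_n) (P : 'M[R]_(n, k)) :
  (forall y : 'cV[R]_m, S^T *m y = 0 -> y = 0) ->
  C *m S^T = 0 ->
  \det (Krho C Mrho P) != 0 ->
  forall (x : 'cV[R]_k) (y : 'cV[R]_m), x != 0 -> y != 0 ->
    P *m x != S^T *m y.
Proof.
move=> _ CS0 detK x y x_neq0 _; apply: contraNneq x_neq0 => Px_grad.
have Kunit : Krho C Mrho P \in unitmx by rewrite unitmxE unitfE.
have CPx0 : C *m (P *m x) = 0 by rewrite Px_grad mulmxA CS0 mul0mx.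
by rewrite -(unitmx_mulmx_eq0 x Kunit) (Krho_mulmx_eq0 Mrho CPx0).
Qed.
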